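(* Let $p\ge q>0$ with $pq>1$, and let $(u,v)$ be a positive bounded classical solution of $-\Delta u=v^p$, $-\Delta v=u^q$ in $\mathbb{R}^n$. Then $$v^{p+1}(x)\le\frac{p+1}{q+1}\,u^{q+1}(x)\qquad\text{for all }x\in\mathbb{R}^n.$$ *)

From Stdlib Require Import Reals.
From Stdlib Require Vectors.Fin.
Open Scope R_scope.

Definition Rn (n : nat) : Type := Fin.t n -> R.

Definition upd {n : nat} (x : Rn n) (i : Fin.t n) (t : R) : Rn n :=
  fun j => if Fin.eq_dec i j then t else x j.

Fixpoint sumFin (n : nat) : (Fin.t n -> R) -> R :=
  match n return (Fin.t n -> R) -> R with
  | O => fun _ => 0
  | S m => fun f => f Fin.F1 + sumFin m (fun i => f (Fin.FS i))
  end.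

(* continuity of f : R^n -> R (sup-norm, equivalently Euclidean, topology) *)
Definition continuous_Rn {n : nat} (f : Rn n -> R) : Prop :=
  forall x eps, 0 < eps -> exists delta, 0 < delta /\
    forall y : Rn n, (forall i, Rabs (y i - x i) < delta) ->
      Rabs (f y - f x) < eps.

Definition has_partial {n : nat} (i : Fin.t n) (f : Rn n -> R) (x : Rn n) (l : R) : Prop :=
  derivable_pt_lim (fun t => f (upd x i t)) (x i) l.

Definition C2_with_laplacian {n : nat} (f : Rn n -> R) (lap : Rn n -> R) : Prop :=
  exists (D1 : Fin.t n -> Rn n -> R) (D2 : Fin.t n -> Fin.t n -> Rn n -> R),
    continuous_Rn f /\
    (forall i x, has_partial i f x (D1 i x)) /\
    (forall i, continuous_Rn (D1 i)) /\
    (forall i j x, has_partial j (D1 i) x (D2 i j x)) /\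
    (forall i j, continuous_Rn (D2 i j)) /\
    (forall x, lap x = sumFin n (fun i => D2 i i x)).

Definition pos_bounded_classical_solution (n : nat) (p q : R) (u v : Rn n -> R) : Prop :=
  (forall x, 0 < u x) /\ (forall x, 0 < v x) /\
  (exists M, forall x, u x <= M) /\ (exists M, forall x, v x <= M) /\
  C2_with_laplacian u (fun x => - Rpower (v x) p) /\
  C2_with_laplacian v (fun x => - Rpower (u x) q).

From Stdlib Require Import Reals Lra FunctionalExtensionality Classical.
From Stdlib Require Vectors.Fin.
From mathcomp Require all_boot all_order all_algebra all_classical all_reals.
From mathcomp Require topology normedtype derive Rstruct Rstruct_topology.
Open Scope R_scope.

(* Put s = (q+1)/(p+1) <= 1 and phi(y) = l y^s with l^(p+1) = (p+1)/(q+1); the estimate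
   is then v <= phi(u).  The function phi is concave and satisfies phi'(y) phi(y)^p = y^q.
   If v - phi(u) were positive somewhere, boundedness gives a maximum point c of
   v - phi(u) - eps |x|^2, where lap v <= phi'(u) lap u + 2 n eps; by the equations this reads
   phi'(u) (v^p - phi(u)^p) <= 2 n eps.  At c the gap v - phi(u) is bounded below
   independently of eps, and so is phi'(u) because u is bounded, which is absurd for
   small eps. *)

Lemma upd_same n (x : Rn n) i t : upd x i t i = t.
Proof. unfold upd. destruct (Fin.eq_dec i i); congruence. Qed.

Lemma upd_other n (x : Rn n) i j t : j <> i -> upd x i t j = x j.
Proof. intros Hji. unfold upd. destruct (Fin.eq_dec i j); congruence. Qed.

Lemma upd_upd n (x : Rn n) i t s : upd (upd x i t) i s = upd x i s.
Proof.
  apply functional_extensionality; intro j; unfold upd.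
  destruct (Fin.eq_dec i j); auto.
Qed.

Lemma upd_id n (x : Rn n) i : upd x i (x i) = x.
Proof.
  apply functional_extensionality; intro j; unfold upd.
  destruct (Fin.eq_dec i j); subst; auto.
Qed.

Lemma sumFin_le n (f g : Fin.t n -> R) :
  (forall j, f j <= g j) -> sumFin n f <= sumFin n g.
Proof.
  induction n as [|n IH]; simpl; intros H; [lra|].
  specialize (IH (fun i => f (Fin.FS i)) (fun i => g (Fin.FS i)) (fun i => H (Fin.FS i))).
  specialize (H Fin.F1). lra.
Qed.

Lemma sumFin_ext n (f g : Fin.t n -> R) :
  (forall j, f j = g j) -> sumFin n f = sumFin n g.
Proof. intros H; apply Rle_antisym; apply sumFin_le; intros j; rewrite H; lra. Qed.

Lemma sumFin_affine n (f : Fin.t n -> R) a b :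
  sumFin n (fun j => a * f j + b) = a * sumFin n f + INR n * b.
Proof.
  induction n as [|n IH]; cbn [sumFin]; [simpl; ring|].
  rewrite (IH (fun i => f (Fin.FS i))), S_INR. ring.
Qed.

Lemma sumFin_nonneg n (f : Fin.t n -> R) : (forall j, 0 <= f j) -> 0 <= sumFin n f.
Proof.
  intros H. replace 0 with (0 * sumFin n f + INR n * 0) by ring.
  rewrite <- sumFin_affine. apply sumFin_le. intros j. specialize (H j). lra.
Qed.

Lemma sumFin_ge_term n (f : Fin.t n -> R) j : (forall k, 0 <= f k) -> f j <= sumFin n f.
Proof.
  induction n as [|n IH]; intros H; [inversion j|].
  cbn [sumFin]. pattern j; apply Fin.caseS'.
  - assert (0 <= sumFin n (fun i => f (Fin.FS i))) by (apply sumFin_nonneg; auto). lra.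
  - intros k. specialize (IH (fun i => f (Fin.FS i)) k (fun i => H (Fin.FS i))).
    specialize (H Fin.F1). simpl in IH. lra.
Qed.

Lemma sumFin_update n (f g : Fin.t n -> R) i :
  (forall j, j <> i -> g j = f j) -> sumFin n g = sumFin n f - f i + g i.
Proof.
  induction n as [|n IH]; intros Hg; [inversion i|].
  cbn [sumFin]. revert Hg. pattern i; apply Fin.caseS'; intros.
  - rewrite (sumFin_ext _ (fun j => g (Fin.FS j)) (fun j => f (Fin.FS j))); [lra|].
    intros j; apply Hg; discriminate.
  - rewrite (IH (fun j => f (Fin.FS j)) (fun j => g (Fin.FS j)) p).
    + rewrite (Hg Fin.F1) by discriminate. lra.
    + intros j Hj. apply Hg. intros E. apply Hj, Fin.FS_inj, E.
Qed.

Definition sqnorm {n : nat} (x : Rn n) : R := sumFin n (fun j => x j * x j).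

Lemma sqnorm_nonneg n (x : Rn n) : 0 <= sqnorm x.
Proof. apply sumFin_nonneg; intros j; apply Rle_0_sqr. Qed.

Lemma sqnorm_ge_coord n (x : Rn n) j : x j * x j <= sqnorm x.
Proof. apply (sumFin_ge_term n (fun j => x j * x j)); intros k; apply Rle_0_sqr. Qed.

Lemma sqnorm_upd n (x : Rn n) i t : sqnorm (upd x i t) = sqnorm x - x i * x i + t * t.
Proof.
  unfold sqnorm. rewrite (sumFin_update n (fun j => x j * x j) _ i), upd_same; [ring|].
  intros j Hj. rewrite upd_other; auto.
Qed.

Lemma continuous_Rn_coord n (j : Fin.t n) : continuous_Rn (fun x : Rn n => x j).
Proof. intros x eps He. exists eps; split; auto. Qed.

Lemma continuous_Rn_plus n (f g : Rn n -> R) :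
  continuous_Rn f -> continuous_Rn g -> continuous_Rn (fun x => f x + g x).
Proof.
  intros Hf Hg x eps He.
  destruct (Hf x (eps/2) ltac:(lra)) as [d1 [d1p H1]].
  destruct (Hg x (eps/2) ltac:(lra)) as [d2 [d2p H2]].
  exists (Rmin d1 d2); split; [apply Rmin_glb_lt; auto|].
  intros y Hy.
  assert (A := H1 y (fun i => Rlt_le_trans _ _ _ (Hy i) (Rmin_l _ _))).
  assert (B := H2 y (fun i => Rlt_le_trans _ _ _ (Hy i) (Rmin_r _ _))).
  replace (f y + g y - (f x + g x)) with ((f y - f x) + (g y - g x)) by ring.
  apply Rle_lt_trans with (1 := Rabs_triang _ _). lra.
Qed.

Lemma continuous_Rn_comp n (f : Rn n -> R) (h : R -> R) :
  continuous_Rn f -> (forall x, exists l, derivable_pt_lim h (f x) l) ->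
  continuous_Rn (fun x => h (f x)).
Proof.
  intros Hf Hh x eps He.
  destruct (Hh x) as [l Hl].
  destruct (derivable_continuous_pt h (f x) (exist _ l Hl) eps He) as [alp [alpp Ha]].
  destruct (Hf x alp alpp) as [d [dp Hd]].
  exists d; split; auto. intros y Hy.
  destruct (Req_dec (f y) (f x)) as [E|E].
  - rewrite E, Rminus_diag, Rabs_R0; auto.
  - apply (Ha (f y)). split; [split; [exact I|auto]|apply Hd; auto].
Qed.

Lemma continuous_Rn_sumFin k n (g : Fin.t n -> Rn k -> R) :
  (forall j, continuous_Rn (g j)) -> continuous_Rn (fun x => sumFin n (fun j => g j x)).
Proof.
  induction n as [|n IH]; intros Hg; cbn [sumFin].
  - intros x eps He; exists 1; split; [lra|]. intros; rewrite Rminus_diag, Rabs_R0; auto.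
  - apply continuous_Rn_plus; [apply Hg|]. apply (IH (fun j => g (Fin.FS j))). intros; apply Hg.
Qed.

Lemma continuous_sqnorm n : continuous_Rn (@sqnorm n).
Proof.
  apply (continuous_Rn_sumFin n n (fun j x => x j * x j)). intros j.
  apply (continuous_Rn_comp n (fun x => x j) (fun y => y * y)); [apply continuous_Rn_coord|].
  intros x. eexists. apply derivable_pt_lim_mult; apply derivable_pt_lim_id.
Qed.

Section BoxExtremum.
Import all_boot all_order all_algebra all_classical all_reals.
Import topology normedtype derive Rstruct Rstruct_topology.
Import Order.TTheory GRing.Theory Num.Theory.
Local Open Scope classical_set_scope.

Let ord_of_fin {n} (i : Fin.t n) : 'I_n :=
  Ordinal (introT ssrnat.ltP (proj2_sig (Fin.to_nat i))).
Let fin_of_ord {n} (j : 'I_n) : Fin.t n := Fin.of_nat_lt (elimT ssrnat.ltP (ltn_ord j)).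

Let fin_of_ordK n (i : Fin.t n) : fin_of_ord (ord_of_fin i) = i.
Proof.
rewrite /fin_of_ord /ord_of_fin /= -[in RHS](Fin.of_nat_to_nat_inv i).
exact: Fin.of_nat_ext.
Qed.

(* Transported to row vectors, where compactness of boxes and the extreme value
   theorem are available. *)
Lemma continuous_Rn_max_on_box n (F : Rn n -> R) (B : R) : Rle 0 B -> continuous_Rn F ->
  exists c : Rn n, (forall i, Rle (Rabs (c i)) B) /\
    forall y : Rn n, (forall i, Rle (Rabs (y i)) B) -> Rle (F y) (F c).
Proof.
move=> B0 cF.
pose to_Rn := fun (r : 'rV[R]_n) (i : Fin.t n) => r ord0 (ord_of_fin i).
pose A := [set v : 'rV[R]_n | forall j, `[(- B)%R, B] (v ord0 j)].
have cA : compact A.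
  exact: (@rV_compact _ n (fun _ => `[(- B)%R, B]) (fun _ => @segment_compact _ (- B)%R B)).
have A0 : (A !=set0)%classic.
  exists (0 : 'rV[R]_n)%R => j /=; rewrite mxE in_itv /= oppr_le0.
  by apply/andP; split; apply/RleP.
have cG : {within A, continuous (F \o to_Rn)}%classic.
  apply: continuous_subspaceT => r P /= /nbhs_ballP [e /= e0 HP].
  have [d [d0 Hd]] := cF (to_Rn r) e (elimT RltP e0).
  exists (fun i0 j => ball (r i0 j) d).
    by move=> i0 j; apply/nbhs_ballP; exists d => //; apply/RltP.
  move=> s Hs; apply: HP; rewrite /ball /=.
  have h : Rabs (F (to_Rn s) - F (to_Rn r)) < e.
    apply: Hd => i; move/RltP: (Hs ord0 (ord_of_fin i)) => h.
    exact: (Rle_lt_trans _ _ _ (Req_le _ _ (Rabs_minus_sym _ _)) h).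
  apply/RltP; exact: (Rle_lt_trans _ _ _ (Req_le _ _ (Rabs_minus_sym _ _)) h).
have [c Ac Hc] := EVT_max_rV A0 cA cG.
exists (to_Rn c); split.
  move=> i; rewrite inE in Ac; have := Ac (ord_of_fin i).
  rewrite /= in_itv /= => /andP[h1 h2].
  by apply: Rabs_le; split; apply/RleP.
move=> y Hy.
have -> : y = to_Rn ((\row_j y (fin_of_ord j))%R).
  by apply: funext => i; rewrite /to_Rn mxE fin_of_ordK.
apply/RleP; apply: Hc; rewrite inE => j /=; rewrite mxE in_itv /=.
have h := Hy (fin_of_ord j); have h1 := Rle_abs (y (fin_of_ord j)).
have h2 := Rle_abs (- y (fin_of_ord j)); rewrite Rabs_Ropp in h2.
by apply/andP; split; apply/RleP; rewrite -?RoppE; lra.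
Qed.
End BoxExtremum.

Lemma penalized_maximum n (f : Rn n -> R) (M eps : R) :
  continuous_Rn f -> (forall x, f x <= M) -> 0 < eps ->
  exists c, forall y, f y - eps * sqnorm y <= f c - eps * sqnorm c.
Proof.
  intros Hf HM He.
  set (F := fun x => f x - eps * sqnorm x).
  set (zero := (fun _ => 0) : Rn n).
  assert (F0 : F zero = f zero).
  { unfold F. replace (sqnorm zero) with (sumFin n (fun j => 0 * zero j + 0)).
    - rewrite sumFin_affine. ring.
    - apply sumFin_ext. intros j. unfold zero. ring. }
  assert (CF : continuous_Rn F).
  { apply continuous_Rn_plus; [exact Hf|].
    apply (continuous_Rn_comp n sqnorm (fun y => - (eps * y))); [apply continuous_sqnorm|].
    intros x. eexists. apply derivable_pt_lim_opp, derivable_pt_lim_scal, derivable_pt_lim_id. }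
  set (B := (M - f zero) / eps + 1).
  assert (HB : 1 <= B).
  { assert (0 <= (M - f zero) / eps).
    { apply Rmult_le_pos; [specialize (HM zero); lra|left; apply Rinv_0_lt_compat; lra]. }
    unfold B. lra. }
  assert (Outside : forall y, (exists j, B < Rabs (y j)) -> F y < F zero).
  { intros y [j Hj].
    assert (Sq : B * B < y j * y j).
    { rewrite <- (Rabs_right (y j * y j)), Rabs_mult by (apply Rle_ge, Rle_0_sqr).
      nra. }
    assert (Big : M - f zero < eps * B).
    { unfold B. rewrite Rmult_plus_distr_l, Rmult_1_r.
      replace (eps * ((M - f zero) / eps)) with (M - f zero) by (field; lra). lra. }
    assert (eps * B <= eps * (y j * y j)) by (apply Rmult_le_compat_l; nra).
    assert (eps * (y j * y j) <= eps * sqnorm y)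
      by (apply Rmult_le_compat_l; [lra|apply sqnorm_ge_coord]).
    specialize (HM y). rewrite F0. unfold F. lra. }
  destruct (continuous_Rn_max_on_box n F B ltac:(lra) CF) as [c [_ Hc]].
  exists c. intros y. fold (F y) (F c).
  assert (F zero <= F c).
  { apply Hc. intros i. unfold zero. rewrite Rabs_R0. lra. }
  destruct (classic (forall i, Rabs (y i) <= B)) as [Hy|Hy]; [apply Hc, Hy|].
  apply not_all_ex_not in Hy. destruct Hy as [j Hj].
  assert (F y < F zero) by (apply Outside; exists j; lra). lra.
Qed.

Lemma second_derivative_nonpos_at_max (h h1 : R -> R) t0 h2 :
  (forall t, derivable_pt_lim h t (h1 t)) -> derivable_pt_lim h1 t0 h2 ->
  (forall t, h t <= h t0) -> h2 <= 0.
Proof.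
  intros Dh Dh1 Hmax.
  pose (pr := (fun t => exist _ (h1 t) (Dh t)) : derivable h).
  assert (Crit : h1 t0 = 0).
  { exact (deriv_maximum h (t0 - 1) (t0 + 1) t0 (pr t0) ltac:(lra) ltac:(lra)
             (fun x _ _ => Hmax x)). }
  destruct (Rle_or_lt h2 0) as [|Hpos]; [assumption|exfalso].
  destruct (Dh1 (h2 / 2) ltac:(lra)) as [[d dpos] Hd]. simpl in Hd.
  assert (Incr : forall k, 0 < k < d -> 0 < h1 (t0 + k)).
  { intros k Hk. assert (A := Hd k ltac:(lra) ltac:(rewrite Rabs_right; lra)).
    rewrite Crit, Rminus_0_r in A. apply Rabs_def2 in A.
    assert (0 < h1 (t0 + k) / k) by lra.
    replace (h1 (t0 + k)) with (h1 (t0 + k) / k * k) by (field; lra).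
    apply Rmult_lt_0_compat; lra. }
  destruct (MVT_cor1 h t0 (t0 + d / 2) pr ltac:(lra)) as [c [Ec Hc]]. simpl in Ec.
  assert (0 < h1 c) by (replace c with (t0 + (c - t0)) by ring; apply Incr; lra).
  assert (0 < h1 c * (t0 + d / 2 - t0)) by (apply Rmult_lt_0_compat; lra).
  specialize (Hmax (t0 + d / 2)). lra.
Qed.

(* The curvature term phi'' U'^2 of the chain rule has the favourable sign and is dropped. *)
Lemma concave_comparison_at_max (V V1 U U1 phi phi1 : R -> R) t0 V2 U2 phi2 eps :
  (forall t, derivable_pt_lim V t (V1 t)) -> derivable_pt_lim V1 t0 V2 ->
  (forall t, derivable_pt_lim U t (U1 t)) -> derivable_pt_lim U1 t0 U2 ->
  (forall t, derivable_pt_lim phi (U t) (phi1 (U t))) ->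
  derivable_pt_lim phi1 (U t0) phi2 -> phi2 <= 0 ->
  (forall t, V t - phi (U t) - eps * (t * t) <= V t0 - phi (U t0) - eps * (t0 * t0)) ->
  V2 <= phi1 (U t0) * U2 + 2 * eps.
Proof.
  intros DV DV1 DU DU1 Dphi Dphi1 Hphi2 Hmax.
  assert (Dh : forall t, derivable_pt_lim (fun t => V t - phi (U t) - eps * (t * t)) t
                          (V1 t - phi1 (U t) * U1 t - eps * (2 * t))).
  { intros t. apply derivable_pt_lim_minus; [apply derivable_pt_lim_minus|].
    - apply DV.
    - apply (derivable_pt_lim_comp U phi); auto.
    - apply derivable_pt_lim_scal. replace (2 * t) with (1 * t + t * 1) by ring.
      apply derivable_pt_lim_mult; apply derivable_pt_lim_id. }
  assert (Dh1 : derivable_pt_lim (fun t => V1 t - phi1 (U t) * U1 t - eps * (2 * t)) t0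
                  (V2 - (phi2 * U1 t0 * U1 t0 + phi1 (U t0) * U2) - eps * (2 * 1))).
  { apply derivable_pt_lim_minus; [apply derivable_pt_lim_minus|].
    - exact DV1.
    - apply (derivable_pt_lim_mult (fun t => phi1 (U t)) U1); [|exact DU1].
      apply (derivable_pt_lim_comp U phi1); auto.
    - apply derivable_pt_lim_scal, derivable_pt_lim_scal, derivable_pt_lim_id. }
  assert (H := second_derivative_nonpos_at_max _ _ t0 _ Dh Dh1 Hmax).
  assert (0 <= U1 t0 * U1 t0) by apply Rle_0_sqr.
  nra.
Qed.

Lemma has_partial_along_line n (f : Rn n -> R) (D : Rn n -> R) (c : Rn n) i :
  (forall x, has_partial i f x (D x)) ->
  forall t, derivable_pt_lim (fun s => f (upd c i s)) t (D (upd c i t)).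
Proof.
  intros Hf t. specialize (Hf (upd c i t)). unfold has_partial in Hf.
  rewrite upd_same in Hf. replace (fun s => f (upd c i s)) with (fun s => f (upd (upd c i t) i s));
    [exact Hf|].
  apply functional_extensionality; intros s. rewrite upd_upd. reflexivity.
Qed.

Lemma laplacian_comparison_at_max n (u v Lu Lv : Rn n -> R) (phi phi1 : R -> R) phi2 eps c :
  C2_with_laplacian u Lu -> C2_with_laplacian v Lv ->
  (forall x, derivable_pt_lim phi (u x) (phi1 (u x))) ->
  derivable_pt_lim phi1 (u c) phi2 -> phi2 <= 0 ->
  (forall y, v y - phi (u y) - eps * sqnorm y <= v c - phi (u c) - eps * sqnorm c) ->
  Lv c <= phi1 (u c) * Lu c + INR n * (2 * eps).
Proof.
  intros [Du1 [Du2 [_ [Pu1 [_ [Pu2 [_ LapU]]]]]]] [Dv1 [Dv2 [_ [Pv1 [_ [Pv2 [_ LapV]]]]]]]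
         Dphi Dphi1 Hphi2 Hmax.
  rewrite LapU, LapV, <- sumFin_affine. apply sumFin_le. intros i.
  assert (Hline := concave_comparison_at_max
    (fun t => v (upd c i t)) (fun t => Dv1 i (upd c i t))
    (fun t => u (upd c i t)) (fun t => Du1 i (upd c i t)) phi phi1 (c i)
    (Dv2 i i c) (Du2 i i c) phi2 eps).
  cbv beta in Hline. rewrite upd_id in Hline. apply Hline; clear Hline.
  - apply has_partial_along_line, Pv1.
  - apply Pv2.
  - apply has_partial_along_line, Pu1.
  - apply Pu2.
  - intros t; apply Dphi.
  - exact Dphi1.
  - exact Hphi2.
  - intros t. specialize (Hmax (upd c i t)). rewrite sqnorm_upd in Hmax. lra.
Qed.

Lemma Rpower_pos x e : 0 < Rpower x e.
Proof. apply exp_pos. Qed.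

Lemma Rle_Rpower_l_nonpos x y e : e <= 0 -> 0 < x <= y -> Rpower y e <= Rpower x e.
Proof.
  intros He Hxy. replace e with (- - e) by ring. rewrite (Rpower_Ropp x), (Rpower_Ropp y).
  apply Rinv_le_contravar; [apply Rpower_pos|]. apply Rle_Rpower_l; lra.
Qed.

Lemma derivable_pt_lim_scaled_Rpower a e y :
  0 < y -> derivable_pt_lim (fun y => a * Rpower y e) y (a * e * Rpower y (e - 1)).
Proof.
  intros Hy. rewrite Rmult_assoc. apply derivable_pt_lim_scal, derivable_pt_lim_power, Hy.
Qed.

Lemma Rpower_uniform_gap p d M : 0 < p -> 0 < d -> d < M ->
  exists k, 0 < k /\
    forall a w, 0 < a -> a + d <= w -> w <= M -> k <= Rpower w p - Rpower a p.
Proof.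
  intros Hp Hd HdM.
  assert (Hr : 0 < 1 - d / M < 1).
  { split; [|assert (0 < d / M) by (apply Rdiv_lt_0_compat; lra); lra].
    assert (d / M < 1) by (apply (Rmult_lt_reg_r M); [lra|]; field_simplify; lra). lra. }
  set (r := 1 - d / M) in Hr.
  assert (Hrp : Rpower r p < 1).
  { replace 1 with (Rpower 1 p) by (unfold Rpower; rewrite ln_1, Rmult_0_r; apply exp_0).
    apply Rlt_Rpower_l; lra. }
  exists (Rpower d p * (1 - Rpower r p)). split.
  { apply Rmult_lt_0_compat; [apply Rpower_pos|lra]. }
  intros a w Ha Haw HwM.
  assert (Hw : 0 < w) by lra.
  assert (Hshrink : 0 < 1 - d / w <= r).
  { unfold r. split.
    - assert (d / w < 1) by (apply (Rmult_lt_reg_r w); [lra|]; field_simplify; lra). lra.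
    - apply Rplus_le_compat_l, Ropp_le_contravar, Rmult_le_compat_l; [lra|].
      apply Rinv_le_contravar; lra. }
  assert (Ha_le : Rpower a p <= Rpower w p * Rpower r p).
  { apply Rle_trans with (Rpower (w * (1 - d / w)) p).
    - apply Rle_Rpower_l; [lra|]. split; [exact Ha|]. field_simplify; lra.
    - rewrite <- Rpower_mult_distr by lra.
      apply Rmult_le_compat_l; [left; apply Rpower_pos|]. apply Rle_Rpower_l; lra. }
  assert (Hd_le : Rpower d p <= Rpower w p) by (apply Rle_Rpower_l; lra).
  nra.
Qed.

Definition comparison_fun (p q y : R) : R :=
  Rpower ((p + 1) / (q + 1)) (/ (p + 1)) * Rpower y ((q + 1) / (p + 1)).

Lemma comparison_fun_Rpower p q y : 0 < p -> 0 < q -> 0 < y ->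
  Rpower (comparison_fun p q y) (p + 1) = (p + 1) / (q + 1) * Rpower y (q + 1).
Proof.
  intros Hp Hq Hy. unfold comparison_fun.
  rewrite <- Rpower_mult_distr by (apply Rpower_pos).
  rewrite !Rpower_mult.
  replace (/ (p + 1) * (p + 1)) with 1 by (field; lra).
  replace ((q + 1) / (p + 1) * (p + 1)) with (q + 1) by (field; lra).
  rewrite Rpower_1; [reflexivity|]. apply Rdiv_lt_0_compat; lra.
Qed.

(* phi'(y) phi(y)^p = y^q, where the first three factors are phi'(y). *)
Lemma comparison_fun_derivative_identity p q y : 0 < p -> 0 < q -> 0 < y ->
  Rpower ((p + 1) / (q + 1)) (/ (p + 1)) * ((q + 1) / (p + 1))
    * Rpower y ((q + 1) / (p + 1) - 1) * Rpower (comparison_fun p q y) p = Rpower y q.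
Proof.
  intros Hp Hq Hy. unfold comparison_fun.
  rewrite <- Rpower_mult_distr by (apply Rpower_pos). rewrite !Rpower_mult.
  set (L := (p + 1) / (q + 1)). set (s := (q + 1) / (p + 1)).
  transitivity (s * (Rpower L (/ (p + 1)) * Rpower L (/ (p + 1) * p))
                  * (Rpower y (s - 1) * Rpower y (s * p))); [ring|].
  rewrite <- !Rpower_plus.
  replace (/ (p + 1) + / (p + 1) * p) with 1 by (field; lra).
  replace (s - 1 + s * p) with q by (unfold s; field; lra).
  rewrite Rpower_1 by (unfold L; apply Rdiv_lt_0_compat; lra).
  unfold s, L. field. lra.
Qed.

Lemma exists_small_pos a b c d : 0 <= a -> 0 < b -> 0 <= c -> 0 < d ->
  exists eps, 0 < eps /\ eps * a <= b /\ c * eps < d.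
Proof.
  intros Ha Hb Hc Hd.
  set (eps := Rmin (b / (a + 1)) (d / (c + 1))).
  assert (E1 : eps * (a + 1) <= b).
  { apply Rle_trans with (b / (a + 1) * (a + 1)); [|right; field; lra].
    apply Rmult_le_compat_r; [lra|apply Rmin_l]. }
  assert (E2 : eps * (c + 1) <= d).
  { apply Rle_trans with (d / (c + 1) * (c + 1)); [|right; field; lra].
    apply Rmult_le_compat_r; [lra|apply Rmin_r]. }
  assert (0 < eps) by (apply Rmin_glb_lt; apply Rdiv_lt_0_compat; lra).
  exists eps. repeat split; nra.
Qed.

Section Comparison.
Variables (n : nat) (p q Mu Mv : R) (u v : Rn n -> R).
Hypotheses (hpq : q <= p) (hq : 0 < q).
Hypotheses (Hu : forall x, 0 < u x) (HMu : forall x, u x <= Mu) (HMv : forall x, v x <= Mv).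
Hypotheses (Lap_u : C2_with_laplacian u (fun x => - Rpower (v x) p))
           (Lap_v : C2_with_laplacian v (fun x => - Rpower (u x) q)).

Let l := Rpower ((p + 1) / (q + 1)) (/ (p + 1)).
Let s := (q + 1) / (p + 1).
Let phi := comparison_fun p q.

Let s_pos : 0 < s.
Proof. apply Rdiv_lt_0_compat; lra. Qed.

Let s_le_1 : s <= 1.
Proof.
  unfold s. apply (Rmult_le_reg_r (p + 1)); [lra|].
  unfold Rdiv. rewrite Rmult_assoc, Rinv_l by lra. lra.
Qed.

Let phi_derivable y : 0 < y -> derivable_pt_lim phi y (l * s * Rpower y (s - 1)).
Proof. apply derivable_pt_lim_scaled_Rpower. Qed.

(* At c the Laplacian comparison and the equations give phi'(u)(v^p - phi(u)^p) <= 2 n eps. *)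
Lemma gap_at_penalized_max d : 0 < d -> d < Mv ->
  exists K, 0 < K /\ forall eps c,
    (forall y, v y - phi (u y) - eps * sqnorm y <= v c - phi (u c) - eps * sqnorm c) ->
    d <= v c - phi (u c) -> K <= INR n * (2 * eps).
Proof.
  intros Hd HdM.
  destruct (Rpower_uniform_gap p d Mv ltac:(lra) Hd HdM) as [k [Hk Hgap]].
  assert (Hls : 0 < l * s) by (apply Rmult_lt_0_compat; [apply Rpower_pos|exact s_pos]).
  exists (l * s * Rpower Mu (s - 1) * k). split.
  { apply Rmult_lt_0_compat; [apply Rmult_lt_0_compat; [exact Hls|apply Rpower_pos]|exact Hk]. }
  intros eps c Hmax Hdc.
  assert (Hconcave : l * s * (s - 1) * Rpower (u c) (s - 1 - 1) <= 0).
  { assert (0 < Rpower (u c) (s - 1 - 1)) by apply Rpower_pos.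
    assert (0 < l) by apply Rpower_pos.
    assert (l * s * (s - 1) <= 0) by nra.
    nra. }
  assert (Hlap := laplacian_comparison_at_max n u v _ _ phi (fun y => l * s * Rpower y (s - 1))
    _ eps c Lap_u Lap_v (fun x => phi_derivable (u x) (Hu x))
    (derivable_pt_lim_scaled_Rpower (l * s) (s - 1) (u c) (Hu c)) Hconcave Hmax).
  cbv beta in Hlap.
  assert (Hident := comparison_fun_derivative_identity p q (u c) ltac:(lra) hq (Hu c)).
  fold l s phi in Hident.
  assert (Hphi : 0 < phi (u c)) by (apply Rmult_lt_0_compat; apply Rpower_pos).
  assert (Hgap_c := Hgap (phi (u c)) (v c) Hphi ltac:(lra) (HMv c)).
  assert (Hslope : Rpower Mu (s - 1) <= Rpower (u c) (s - 1)).
  { apply Rle_Rpower_l_nonpos; [lra|split; [apply Hu|apply HMu]]. }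
  assert (l * s * Rpower Mu (s - 1) * k <= l * s * Rpower (u c) (s - 1) * k)
    by (apply Rmult_le_compat_r; [lra|apply Rmult_le_compat_l; lra]).
  assert (l * s * Rpower (u c) (s - 1) * k
          <= l * s * Rpower (u c) (s - 1) * (Rpower (v c) p - Rpower (phi (u c)) p)).
  { apply Rmult_le_compat_l; [|exact Hgap_c].
    left; apply Rmult_lt_0_compat; [exact Hls|apply Rpower_pos]. }
  lra.
Qed.

Lemma v_le_comparison_fun x : v x <= phi (u x).
Proof.
  destruct (Rle_or_lt (v x) (phi (u x))) as [|Hlt]; [assumption|exfalso].
  set (delta := v x - phi (u x)).
  assert (Hdelta : 0 < delta) by (unfold delta; lra).
  assert (Hphi : forall y, 0 < phi (u y)) by (intros y; apply Rmult_lt_0_compat; apply Rpower_pos).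
  set (W := fun y => v y + - phi (u y)).
  assert (HW : forall y, W y <= Mv) by (intros y; specialize (HMv y); specialize (Hphi y); unfold W; lra).
  assert (CW : continuous_Rn W).
  { destruct Lap_v as [_ [_ [Cv _]]]. apply continuous_Rn_plus; [exact Cv|].
    apply (continuous_Rn_comp n u (fun y => - phi y)); [|intros y; eexists;
      apply derivable_pt_lim_opp, phi_derivable, Hu].
    destruct Lap_u as [_ [_ [Cu _]]]. exact Cu. }
  destruct (gap_at_penalized_max (delta / 2)) as [K [HK Hgap]].
  { lra. }
  { specialize (HW x). unfold W, delta in *. lra. }
  destruct (exists_small_pos (sqnorm x) (delta / 2) (INR n * 2) K) as [eps [He [He1 He2]]];
    [apply sqnorm_nonneg|lra|assert (0 <= INR n) by apply pos_INR; lra|exact HK|].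
  destruct (penalized_maximum n W Mv eps CW HW He) as [c Hc].
  assert (HK_eps : K <= INR n * (2 * eps)).
  { apply (Hgap eps c).
    - intros y. specialize (Hc y). unfold W in Hc. lra.
    - specialize (Hc x). assert (0 <= eps * sqnorm c) by (apply Rmult_le_pos; [lra|apply sqnorm_nonneg]).
      unfold W, delta in *. lra. }
  lra.
Qed.

End Comparison.

Theorem lemma2p5 (n : nat) (p q : R) (u v : Rn n -> R)
  (hpq : q <= p) (hq : 0 < q) (hpq1 : 1 < p * q)
  (hsol : pos_bounded_classical_solution n p q u v) :
  forall x : Rn n,
    Rpower (v x) (p + 1) <= (p + 1) / (q + 1) * Rpower (u x) (q + 1).
Proof.
  destruct hsol as [Hu [Hv [[Mu HMu] [[Mv HMv] [Lap_u Lap_v]]]]].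
  intros x.
  rewrite <- comparison_fun_Rpower by (auto; lra).
  apply Rle_Rpower_l; [lra|]. split; [apply Hv|].
  exact (v_le_comparison_fun n p q Mu Mv u v hpq hq Hu HMu HMv Lap_u Lap_v x).
Qed.
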